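(* Let $S$ be an inverse semigroup with zero. Two distinct non-zero elements $x,y\in S$ are adjacent in $\mathcal{P}_L(S)$ if and only if $xy^{-1}\neq 0$.
   Context: For an inverse semigroup $S$, $x^{-1}$ denotes the unique inverse of $x$ (the unique $y$ with $xyx=x$, $yxy=y$). For $a\in S$, $S^1a=\{sa:s\in S\}\cup\{a\}$. $\mathcal{P}_L(S)$ is the simple graph whose vertices are the non-zero elements of $S$, two distinct vertices $a,b$ being adjacent iff $S^1a\cap S^1b$ contains an element different from $0$. *)

From Stdlib Require Import ClassicalEpsilon.

Record InvSemigroup0 := {
  car :> Type;
  mul : car -> car -> car;
  zero : car;
  mulA : forall x y z, mul x (mul y z) = mul (mul x y) z;
  mul0s : forall x, mul zero x = zero;
  muls0 : forall x, mul x zero = zero;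
  inv_unique : forall x : car, exists! y : car,
      mul (mul x y) x = x /\ mul (mul y x) y = y
}.

Definition inv (S : InvSemigroup0) (x : S) : S :=
  proj1_sig (constructive_indefinite_description _ (inv_unique S x)).

(* c ∈ S^1 a = {s a : s ∈ S} ∪ {a} *)
Definition inS1 (S : InvSemigroup0) (a c : S) : Prop :=
  (exists s : S, c = mul S s a) \/ c = a.

Definition PL_adj (S : InvSemigroup0) (a b : S) : Prop :=
  a <> zero S /\ b <> zero S /\ a <> b /\
  exists c : S, c <> zero S /\ inS1 S a c /\ inS1 S b c.

(** The left ideal S^1 a of an inverse semigroup is exactly the set of c with
    c (a^-1 a) = c, and idempotents commute.  So a non-zero c in S^1 x ∩ S^1 y
    satisfies c = c (x^-1 x)(y^-1 y) = (c x^-1)(x y^-1) y, which vanishes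
    if x y^-1 = 0; conversely x (y^-1 y) lies in both ideals, and it is non-zero
    because right multiplication by y^-1 sends it to x y^-1. *)
From Stdlib Require Import ClassicalEpsilon.

Section InverseSemigroup.
Variable S : InvSemigroup0.
Local Notation "a * b" := (mul S a b).
Local Notation "0" := (zero S).
Local Notation "x ^-1" := (inv S x) (at level 3, format "x ^-1").

Definition inverse_of (x y : S) : Prop := x * y * x = x /\ y * x * y = y.

Definition idempotent (e : S) : Prop := e * e = e.

Lemma inverse_of_sym (x y : S) : inverse_of x y -> inverse_of y x.
Proof. intros [H1 H2]; split; assumption. Qed.

Lemma inverse_of_inv (x : S) : inverse_of x x^-1.
Proof.
  unfold inv; destruct (constructive_indefinite_description _ _) as [y Hy].
  exact (proj1 Hy).
Qed.

Lemma inverse_ofE (x y : S) : inverse_of x y -> y = x^-1.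
Proof.
  intros Hy; destruct (inv_unique S x) as [w [_ Hw]].
  rewrite <- (Hw y Hy), <- (Hw _ (inverse_of_inv x)); reflexivity.
Qed.

Lemma inverse_of_eq (x y z : S) : inverse_of x y -> inverse_of x z -> y = z.
Proof. intros Hy Hz; rewrite (inverse_ofE _ _ Hy), (inverse_ofE _ _ Hz); reflexivity. Qed.

Lemma mul_inv_mul (x : S) : x * x^-1 * x = x.
Proof. apply (inverse_of_inv x). Qed.

Lemma inv_mul_inv (x : S) : x^-1 * x * x^-1 = x^-1.
Proof. apply (inverse_of_inv x). Qed.

Lemma idempotent_inverse_of (e : S) : idempotent e -> inverse_of e e.
Proof. unfold idempotent; intros He; split; rewrite He; exact He. Qed.

Lemma idempotent_mull (e w : S) : idempotent e -> e * (e * w) = e * w.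
Proof. intros He; rewrite mulA, He; reflexivity. Qed.

Lemma idempotent_inv_mul (x : S) : idempotent (x^-1 * x).
Proof. unfold idempotent; rewrite mulA, inv_mul_inv; reflexivity. Qed.

(* The inverse a of ef is also inverted by f a e; uniqueness gives a = f a e,
   whence a is idempotent, hence self-inverse, and so ef = a. *)
Lemma idempotent_mul (e f : S) :
  idempotent e -> idempotent f -> idempotent (e * f).
Proof.
  intros He Hf.
  set (a := (e * f)^-1).
  destruct (inverse_of_inv (e * f)) as [Hefa Haef]; fold a in Hefa, Haef.
  assert (Ha : a = f * (a * e)).
  { apply (inverse_of_eq (e * f)); [apply inverse_of_inv|].
    split; repeat rewrite <- mulA.
    - rewrite (idempotent_mull f _ Hf), (idempotent_mull e _ He).
      repeat rewrite <- mulA; repeat rewrite <- mulA in Hefa; exact Hefa.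
    - rewrite (idempotent_mull e _ He), (idempotent_mull f _ Hf).
      transitivity (f * ((a * (e * f) * a) * e));
        [repeat rewrite <- mulA; reflexivity | rewrite Haef; reflexivity]. }
  assert (Haa : idempotent a).
  { unfold idempotent; rewrite Ha at 1 2.
    transitivity (f * ((a * (e * f) * a) * e));
      [repeat rewrite <- mulA; reflexivity | rewrite Haef, <- Ha; reflexivity]. }
  assert (Hef : e * f = a).
  { apply (inverse_of_eq a); [|apply idempotent_inverse_of, Haa].
    apply inverse_of_sym, inverse_of_inv. }
  rewrite Hef; exact Haa.
Qed.

Lemma idempotent_comm (e f : S) :
  idempotent e -> idempotent f -> e * f = f * e.
Proof.
  intros He Hf.
  (* both ef and fe invert the idempotent ef *)
  apply (inverse_of_eq (e * f)).
  - apply idempotent_inverse_of, idempotent_mul; assumption.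
  - pose proof (idempotent_mul e f He Hf) as Hef.
    pose proof (idempotent_mul f e Hf He) as Hfe.
    unfold idempotent in Hef, Hfe.
    split; repeat rewrite <- mulA.
    + rewrite (idempotent_mull f _ Hf), (idempotent_mull e _ He).
      repeat rewrite <- mulA in Hef; exact Hef.
    + rewrite (idempotent_mull e _ He), (idempotent_mull f _ Hf).
      repeat rewrite <- mulA in Hfe; exact Hfe.
Qed.

Lemma inS1E (a c : S) : inS1 S a c <-> c * (a^-1 * a) = c.
Proof.
  split.
  - intros [[s ->] | ->].
    + rewrite <- mulA, (mulA S a), mul_inv_mul; reflexivity.
    + rewrite mulA, mul_inv_mul; reflexivity.
  - intros Hc; left; exists (c * a^-1); rewrite <- mulA; symmetry; exact Hc.
Qed.

Lemma inS1_mul_inv_mul (x y : S) : inS1 S x (x * (y^-1 * y)).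
Proof.
  apply inS1E.
  rewrite <- mulA, <- (idempotent_comm _ _ (idempotent_inv_mul x)
                        (idempotent_inv_mul y)),
    (mulA S x (x^-1 * x)), (mulA S x), mul_inv_mul; reflexivity.
Qed.

Lemma inS1_mul (s y : S) : inS1 S y (s * y).
Proof. left; exists s; reflexivity. Qed.

Lemma mul_inv_mul_eq0 (x y : S) : x * (y^-1 * y) = 0 -> x * y^-1 = 0.
Proof. intros Hc; rewrite <- (inv_mul_inv y), mulA, Hc, mul0s; reflexivity. Qed.

Lemma inS1_inS1_eq0 (x y c : S) :
  x * y^-1 = 0 -> inS1 S x c -> inS1 S y c -> c = 0.
Proof.
  intros Hxy Hcx Hcy; apply inS1E in Hcx; apply inS1E in Hcy.
  rewrite <- Hcy, <- Hcx.
  transitivity (c * x^-1 * (x * y^-1) * y); [repeat rewrite <- mulA; reflexivity|].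
  rewrite Hxy, muls0, mul0s; reflexivity.
Qed.

End InverseSemigroup.

Theorem mainTheorem10 (S : InvSemigroup0) (x y : S) :
  x <> zero S -> y <> zero S -> x <> y ->
  (PL_adj S x y <-> mul S x (inv S y) <> zero S).
Proof.
  intros Hx Hy Hxy; split.
  - intros (_ & _ & _ & c & Hc & Hcx & Hcy) Hxy0.
    exact (Hc (inS1_inS1_eq0 S x y c Hxy0 Hcx Hcy)).
  - intros Hxy0; repeat split; try assumption.
    exists (mul S x (mul S (inv S y) y)); repeat split.
    + intros Hc; exact (Hxy0 (mul_inv_mul_eq0 S x y Hc)).
    + apply inS1_mul_inv_mul.
    + rewrite mulA; apply inS1_mul.
Qed.
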